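(* Let $\Theta=(\alpha,\rho_r,\rho_d,\rho_s,\rho_0,T)$ with $\alpha>1$, $\rho_r,\rho_d,\rho_s,\rho_0>0$, $T>1$, and $K_{max}(\Theta):=\min\big(\frac T4,\frac{\rho_r}{3\rho_0},\frac{3\rho_d}{2\rho_0}\big)>10$. Let $0<R_1<R_2<R_{max}(\Theta)$ be such that $\rho_r<\frac{\alpha}{(1+\rho_d/\rho_r)^2}\frac{g^2(R_i)}{R_i}$ for $i=1,2$. Then $\zeta'_{csi}(R_1,\Theta)<\zeta'_{csi}(R_2,\Theta)$.
   Context: $g(x)=\sqrt{\frac{x}{2^x-1}}\big(2^x x\ln2-2^x+1\big)$, $x>0$. $R_{max}(\Theta)=c(\Theta)K_{max}(\Theta)$ where $c(\Theta)>0$ is the unique positive solution of $g(c)/\sqrt c=(1+\rho_d/\rho_r)\sqrt{K_{max}(\Theta)\rho_r/\alpha}$. For $R>0$ and real $M>K\ge1$, $\frac{1}{\zeta_{csi}(M,K,R,\Theta)}=\frac1R\big[\frac{\alpha K}{M-K}(2^{R/K}-1)+M\rho_r+K\rho_d+\rho_s\big]$, and $\zeta'_{csi}(R,\Theta)$ is the maximum of $\zeta_{csi}(M,K,R,\Theta)$ over real $(M,K)$ with $1\le K\le K_{max}(\Theta)$, $M>K$. *)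

From Stdlib Require Import Reals.
From Coquelicot Require Import Coquelicot.
Open Scope R_scope.

Definition g (x : R) : R :=
  sqrt (x / (Rpower 2 x - 1)) * (Rpower 2 x * x * ln 2 - Rpower 2 x + 1).

Definition Kmax (rho_r rho_d rho_0 T : R) : R :=
  Rmin (T / 4) (Rmin (rho_r / (3 * rho_0)) (3 * rho_d / (2 * rho_0))).

Definition c_eq (alpha rho_r rho_d rho_0 T c : R) : Prop :=
  0 < c /\
  g c / sqrt c = (1 + rho_d / rho_r) * sqrt (Kmax rho_r rho_d rho_0 T * rho_r / alpha).

Definition zeta_csi (alpha rho_r rho_d rho_s M K Rt : R) : R :=
  / ((1 / Rt) * (alpha * K / (M - K) * (Rpower 2 (Rt / K) - 1)
                 + M * rho_r + K * rho_d + rho_s)).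

Definition zeta'_csi (alpha rho_r rho_d rho_s rho_0 T Rt : R) : Rbar :=
  Lub_Rbar (fun z => exists M K,
    1 <= K /\ K <= Kmax rho_r rho_d rho_0 T /\ K < M /\
    z = zeta_csi alpha rho_r rho_d rho_s M K Rt).

From Stdlib Require Import Reals Lra.
From Coquelicot Require Import Coquelicot.
Open Scope R_scope.

(* Minimising over M by AM-GM gives
   zeta'(R) = max_{1 <= K <= Kmax} R / (2 sqrt(alpha rho_r K (2^(R/K) - 1)) + K (rho_r + rho_d) + rho_s).
   Scaling (K, R) to (s K, s R) with s > 1 multiplies the numerator by s but the denominator
   by less, so it strictly increases this quantity.  Take K* maximising at R1 and t = R2 / R1.
   If t K* <= Kmax we are done by scaling.  Otherwise scale up to Kmax and use that the
   quantity is increasing in R on (0, c Kmax): its derivative is positive as long as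
   g(y)/sqrt y stays below its value at c, which holds on (0, c) because g(y)/sqrt y -> 0 at 0
   and c is the only crossing. *)

Lemma ln2_pos : 0 < ln 2.
Proof. rewrite <- ln_1; apply ln_increasing; lra. Qed.

Lemma Rpower2_gt1 (y : R) : 0 < y -> 1 < Rpower 2 y.
Proof. intros Hy; rewrite <- (Rpower_O 2) at 1 by lra; apply Rpower_lt; lra. Qed.

Lemma am_gm_inv_le (p q u : R) : 0 <= p -> 0 < q -> 0 < u ->
  2 * sqrt (p * q) <= p / u + q * u.
Proof.
  intros Hp Hq Hu.
  assert (Hs : sqrt (p * q) * sqrt (p * q) = p * q) by (apply sqrt_sqrt; nra).
  pose proof (sqrt_pos (p * q)).
  apply (Rmult_le_reg_r u); [lra|].
  replace ((p / u + q * u) * u) with (p + q * u * u) by (field; lra).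
  apply (Rmult_le_reg_l q); [lra|].
  pose proof (Rle_0_sqr (q * u - sqrt (p * q))); unfold Rsqr in *; nra.
Qed.

Lemma am_gm_inv_eq (p q : R) : 0 < p -> 0 < q ->
  p / sqrt (p / q) + q * sqrt (p / q) = 2 * sqrt (p * q).
Proof.
  intros Hp Hq.
  assert (Hu : 0 < sqrt (p / q)) by (apply sqrt_lt_R0; apply Rdiv_lt_0_compat; lra).
  assert (Hpq : sqrt (p * q) = q * sqrt (p / q)).
  { replace (p * q) with (q * q * (p / q)) by (field; lra).
    rewrite sqrt_mult, sqrt_square by (try apply Rdiv_le_0_compat; nra). reflexivity. }
  rewrite Hpq.
  assert (Hu2 : sqrt (p / q) * sqrt (p / q) = p / q)
    by (apply sqrt_sqrt; apply Rdiv_le_0_compat; lra).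
  apply (Rmult_eq_reg_r (sqrt (p / q))); [|lra].
  field_simplify; [|lra].
  replace (sqrt (p / q) ^ 2) with (p / q) by (simpl; lra). field. lra.
Qed.

Definition phi (y : R) : R := Rpower 2 y * y * ln 2 - Rpower 2 y + 1.

Lemma pow2_ratio_is_derive (p B y : R) : 0 < p -> 0 < B -> 0 < y ->
  is_derive (fun x => x / (2 * p * sqrt (Rpower 2 x - 1) + B)) y
    ((B * sqrt (Rpower 2 y - 1) + p * (Rpower 2 y - 1) - p * phi y)
     / (sqrt (Rpower 2 y - 1) * (2 * p * sqrt (Rpower 2 y - 1) + B) ^ 2)).
Proof.
  intros Hp HB Hy.
  pose proof (Rpower2_gt1 y Hy) as HE.
  assert (Ht : 0 < sqrt (Rpower 2 y - 1)) by (apply sqrt_lt_R0; lra).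
  assert (Ht2 : sqrt (Rpower 2 y - 1) * sqrt (Rpower 2 y - 1) = Rpower 2 y - 1) by (apply sqrt_sqrt; lra).
  unfold phi, Rpower in *. auto_derive;
    set (E := exp (y * ln 2)) in *; change (E + - (1)) with (E - 1) in *;
    set (t := sqrt (E - 1)) in *;
    assert (0 < p * t) by (apply Rmult_lt_0_compat; lra).
  - repeat split; lra.
  - clearbody t. replace E with (t * t + 1) by lra. field. lra.
Qed.

Lemma pow2_ratio_increasing (p B c : R) : 0 < p -> 0 < B ->
  (forall y, 0 < y < c -> p * phi y < B * sqrt (Rpower 2 y - 1)) ->
  forall y z, 0 < y -> y < z -> z < c ->
  y / (2 * p * sqrt (Rpower 2 y - 1) + B) < z / (2 * p * sqrt (Rpower 2 z - 1) + B).
Proof.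
  intros Hp HB Hphi.
  apply (incr_function _ (Finite 0) (Finite c) _ (fun y Hy _ => pow2_ratio_is_derive p B y Hp HB Hy)).
  intros y Hy0 Hyc; simpl in Hy0, Hyc.
  pose proof (Rpower2_gt1 y Hy0).
  assert (0 < sqrt (Rpower 2 y - 1)) by (apply sqrt_lt_R0; lra).
  assert (0 < p * (Rpower 2 y - 1)) by (apply Rmult_lt_0_compat; lra).
  pose proof (Hphi y (conj Hy0 Hyc)).
  apply Rdiv_lt_0_compat; [lra|].
  apply Rmult_lt_0_compat; [lra|]. apply pow_lt. nra.
Qed.

Lemma g_div_sqrt_eq (y : R) : 0 < y -> g y / sqrt y = phi y / sqrt (Rpower 2 y - 1).
Proof.
  intros Hy. pose proof (Rpower2_gt1 y Hy). unfold g, phi.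
  rewrite sqrt_div by lra.
  assert (0 < sqrt y) by (apply sqrt_lt_R0; lra).
  assert (0 < sqrt (Rpower 2 y - 1)) by (apply sqrt_lt_R0; lra).
  field. lra.
Qed.

Lemma g_div_sqrt_continuous (y : R) : 0 < y -> continuity_pt (fun x => g x / sqrt x) y.
Proof.
  intros Hy. apply continuity_pt_filterlim.
  apply (ex_derive_continuous (K := R_AbsRing) (V := R_NormedModule) (fun x => g x / sqrt x)).
  pose proof (Rpower2_gt1 y Hy) as HE.
  unfold g, Rpower in *. auto_derive. repeat split; try lra.
  - apply Rdiv_lt_0_compat; lra.
  - apply Rgt_not_eq, sqrt_lt_R0; lra.
Qed.

Lemma phi_div_sqrt_le (y : R) : 0 < y -> y * ln 2 <= 1 ->
  phi y / sqrt (Rpower 2 y - 1) <= y * ln 2.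
Proof.
  intros Hy Hv. pose proof ln2_pos. set (v := y * ln 2) in *.
  assert (Hv0 : 0 < v) by (apply Rmult_lt_0_compat; lra).
  unfold phi. change (Rpower 2 y) with (exp v).
  pose proof (exp_ineq1_le v).
  assert (Hphi : exp v * y * ln 2 - exp v + 1 <= v * v) by (unfold v in *; nra).
  assert (Hsqrt : v <= sqrt (exp v - 1)).
  { assert (v <= sqrt v).
    { pose proof (sqrt_sqrt v ltac:(lra)). pose proof (sqrt_pos v).
      assert (sqrt v <= 1) by (rewrite <- sqrt_1; apply sqrt_le_1_alt; lra). nra. }
    assert (sqrt v <= sqrt (exp v - 1)) by (apply sqrt_le_1_alt; lra). lra. }
  apply (Rmult_le_reg_r (sqrt (exp v - 1))); [lra|].
  unfold Rdiv. rewrite Rmult_assoc, Rinv_l by lra. nra.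
Qed.

Lemma g_div_sqrt_small (C y : R) : 0 < C -> 0 < y ->
  exists e, 0 < e < y /\ g e / sqrt e < C.
Proof.
  intros HC Hy. pose proof ln2_pos.
  set (v := Rmin (Rmin 1 (C / 2)) (y * ln 2 / 2)).
  assert (Hv : 0 < v /\ v <= 1 /\ v <= C / 2 /\ v <= y * ln 2 / 2).
  { unfold v. repeat split.
    - apply Rmin_glb_lt; [apply Rmin_glb_lt|]; try lra.
      assert (0 < y * ln 2) by (apply Rmult_lt_0_compat; lra). lra.
    - eapply Rle_trans; [apply Rmin_l | apply Rmin_l].
    - eapply Rle_trans; [apply Rmin_l | apply Rmin_r].
    - apply Rmin_r. }
  exists (v / ln 2).
  assert (Hvln : v / ln 2 * ln 2 = v) by (field; lra).
  assert (0 < y * ln 2) by (apply Rmult_lt_0_compat; lra).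
  split; [split|].
  - apply Rdiv_lt_0_compat; lra.
  - apply (Rmult_lt_reg_r (ln 2)); lra.
  - assert (0 < v / ln 2) by (apply Rdiv_lt_0_compat; lra).
    rewrite g_div_sqrt_eq by lra.
    pose proof (phi_div_sqrt_le (v / ln 2) ltac:(lra) ltac:(lra)). lra.
Qed.

Lemma lt_before_unique_crossing (f : R -> R) (C c : R) :
  (forall y, 0 < y -> continuity_pt f y) ->
  (forall y, 0 < y -> exists e, 0 < e < y /\ f e < C) ->
  (forall y, 0 < y -> f y = C -> y = c) ->
  forall y, 0 < y < c -> f y < C.
Proof.
  intros Hcont Hsmall Huniq y Hy.
  destruct (Rlt_le_dec (f y) C) as [Hlt | [Hgt | Heq]]; [exact Hlt | exfalso | ].
  - destruct (Hsmall y ltac:(lra)) as [e [He Hfe]].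
    destruct (Ranalysis5.IVT_interv (fun x => f x - C) e y) as [z [Hz Hfz]].
    + intros x Hx. apply continuity_pt_minus; [apply Hcont; lra | apply continuity_pt_const; now intros ? ?].
    + lra.
    + lra.
    + lra.
    + assert (z = c) by (apply Huniq; lra). lra.
  - assert (y = c) by (apply Huniq; lra). lra.
Qed.

Lemma g_div_sqrt_lt_below_c (alpha rho_r rho_d rho_0 T c : R) :
  0 < alpha -> 0 < rho_r -> 0 < rho_d -> 0 < Kmax rho_r rho_d rho_0 T ->
  (forall c', c_eq alpha rho_r rho_d rho_0 T c' -> c' = c) ->
  forall y, 0 < y < c ->
  g y / sqrt y < (1 + rho_d / rho_r) * sqrt (Kmax rho_r rho_d rho_0 T * rho_r / alpha).
Proof.
  intros Ha Hr Hd HK Huniq.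
  assert (0 < rho_d / rho_r) by (apply Rdiv_lt_0_compat; lra).
  assert (0 < sqrt (Kmax rho_r rho_d rho_0 T * rho_r / alpha))
    by (apply sqrt_lt_R0, Rdiv_lt_0_compat; [apply Rmult_lt_0_compat|]; lra).
  apply lt_before_unique_crossing.
  - exact g_div_sqrt_continuous.
  - intros y Hy. apply g_div_sqrt_small; [apply Rmult_lt_0_compat; lra | exact Hy].
  - intros y Hy Heq. apply Huniq. split; assumption.
Qed.

Definition zeta_opt (a rr rd rs K Rt : R) : R :=
  Rt / (2 * sqrt (a * K * (Rpower 2 (Rt / K) - 1) * rr) + K * (rr + rd) + rs).

Section OptimalM.

Variables a rr rd rs : R.
Hypotheses (Ha : 0 < a) (Hrr : 0 < rr) (Hrd : 0 < rd) (Hrs : 0 < rs).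

Lemma zeta_opt_den_pos (K Rt : R) : 0 < K ->
  0 < 2 * sqrt (a * K * (Rpower 2 (Rt / K) - 1) * rr) + K * (rr + rd) + rs.
Proof.
  intros HK. pose proof (sqrt_pos (a * K * (Rpower 2 (Rt / K) - 1) * rr)).
  assert (0 < K * (rr + rd)) by (apply Rmult_lt_0_compat; lra). lra.
Qed.

Lemma zeta_csi_eq (M K Rt : R) : K < M ->
  zeta_csi a rr rd rs M K Rt
  = Rt / (a * K * (Rpower 2 (Rt / K) - 1) / (M - K) + rr * (M - K) + K * (rr + rd) + rs).
Proof.
  intros HKM. unfold zeta_csi.
  replace (a * K / (M - K) * (Rpower 2 (Rt / K) - 1) + M * rr + K * rd + rs)
    with (a * K * (Rpower 2 (Rt / K) - 1) / (M - K) + rr * (M - K) + K * (rr + rd) + rs)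
    by (field; lra).
  rewrite Rinv_mult, Rinv_div, Rdiv_1_r. reflexivity.
Qed.

Lemma zeta_csi_le_zeta_opt (M K Rt : R) : 0 < Rt -> 0 < K -> K < M ->
  zeta_csi a rr rd rs M K Rt <= zeta_opt a rr rd rs K Rt.
Proof.
  intros HRt HK HKM. rewrite zeta_csi_eq by lra. unfold zeta_opt.
  pose proof (Rpower2_gt1 (Rt / K) ltac:(apply Rdiv_lt_0_compat; lra)).
  pose proof (zeta_opt_den_pos K Rt HK).
  assert (0 <= a * K * (Rpower 2 (Rt / K) - 1)) by (repeat apply Rmult_le_pos; lra).
  pose proof (am_gm_inv_le (a * K * (Rpower 2 (Rt / K) - 1)) rr (M - K)).
  apply Rmult_le_compat_l; [lra|]. apply Rinv_le_contravar; lra.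
Qed.

Lemma zeta_csi_attains_zeta_opt (K Rt : R) : 0 < Rt -> 0 < K ->
  exists M, K < M /\ zeta_csi a rr rd rs M K Rt = zeta_opt a rr rd rs K Rt.
Proof.
  intros HRt HK.
  pose proof (Rpower2_gt1 (Rt / K) ltac:(apply Rdiv_lt_0_compat; lra)).
  set (p := a * K * (Rpower 2 (Rt / K) - 1)).
  assert (Hp : 0 < p) by (unfold p; repeat apply Rmult_lt_0_compat; lra).
  assert (0 < sqrt (p / rr)) by (apply sqrt_lt_R0; apply Rdiv_lt_0_compat; lra).
  exists (K + sqrt (p / rr)); split; [lra|].
  rewrite zeta_csi_eq by lra. unfold zeta_opt. fold p.
  replace (K + sqrt (p / rr) - K) with (sqrt (p / rr)) by ring.
  rewrite am_gm_inv_eq by lra. reflexivity.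
Qed.

Lemma zeta_opt_scale_lt (K Rt s : R) : 0 < K -> 0 < Rt -> 1 < s ->
  zeta_opt a rr rd rs K Rt < zeta_opt a rr rd rs (s * K) (s * Rt).
Proof.
  intros HK HRt Hs. unfold zeta_opt.
  replace (s * Rt / (s * K)) with (Rt / K) by (field; lra).
  pose proof (Rpower2_gt1 (Rt / K) ltac:(apply Rdiv_lt_0_compat; lra)).
  set (X := a * K * (Rpower 2 (Rt / K) - 1) * rr).
  assert (HX : 0 <= X) by (unfold X; repeat apply Rmult_le_pos; lra).
  replace (a * (s * K) * (Rpower 2 (Rt / K) - 1) * rr) with (s * X) by (unfold X; ring).
  rewrite sqrt_mult_alt by lra.
  assert (Hss : sqrt s <= s).
  { pose proof (sqrt_sqrt s ltac:(lra)).
    assert (1 <= sqrt s) by (rewrite <- sqrt_1; apply sqrt_le_1_alt; lra). nra. }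
  pose proof (sqrt_pos X). pose proof (sqrt_pos s).
  assert (0 < K * (rr + rd)) by (apply Rmult_lt_0_compat; lra).
  set (D := 2 * sqrt X + K * (rr + rd) + rs).
  assert (HD : 0 < D) by (unfold D; lra).
  replace (Rt / D) with (s * Rt / (s * D)) by (field; lra).
  assert (sqrt s * sqrt X <= s * sqrt X) by (apply Rmult_le_compat_r; lra).
  assert (0 < s * K * (rr + rd)) by (rewrite Rmult_assoc; apply Rmult_lt_0_compat; lra).
  assert (0 <= sqrt s * sqrt X) by (apply Rmult_le_pos; lra).
  apply Rmult_lt_compat_l; [nra|].
  apply Rinv_lt_contravar; [apply Rmult_lt_0_compat; nra|]. unfold D. nra.
Qed.

Lemma zeta_opt_scale_le (K Rt s : R) : 0 < K -> 0 < Rt -> 1 <= s ->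
  zeta_opt a rr rd rs K Rt <= zeta_opt a rr rd rs (s * K) (s * Rt).
Proof.
  intros HK HRt [Hs | <-].
  - apply Rlt_le, zeta_opt_scale_lt; assumption.
  - rewrite !Rmult_1_l. apply Rle_refl.
Qed.

Lemma zeta_opt_as_ratio (K Rt : R) : 0 < K -> 0 < Rt ->
  zeta_opt a rr rd rs K Rt
  = K * (Rt / K / (2 * sqrt (a * K * rr) * sqrt (Rpower 2 (Rt / K) - 1) + (K * (rr + rd) + rs))).
Proof.
  intros HK HRt. unfold zeta_opt.
  pose proof (Rpower2_gt1 (Rt / K) ltac:(apply Rdiv_lt_0_compat; lra)).
  replace (a * K * (Rpower 2 (Rt / K) - 1) * rr) with (a * K * rr * (Rpower 2 (Rt / K) - 1)) by ring.
  rewrite sqrt_mult by (repeat apply Rmult_le_pos; lra).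
  pose proof (zeta_opt_den_pos K Rt HK) as HD.
  replace (a * K * (Rpower 2 (Rt / K) - 1) * rr) with (a * K * rr * (Rpower 2 (Rt / K) - 1)) in HD by ring.
  rewrite sqrt_mult in HD by (repeat apply Rmult_le_pos; lra).
  field. lra.
Qed.

Lemma zeta_opt_increasing (K c : R) : 0 < K ->
  (forall y, 0 < y < c -> g y / sqrt y < (1 + rd / rr) * sqrt (K * rr / a)) ->
  forall R1 R2, 0 < R1 -> R1 < R2 -> R2 < c * K ->
  zeta_opt a rr rd rs K R1 < zeta_opt a rr rd rs K R2.
Proof.
  intros HK HG R1 R2 HR1 HR12 HR2.
  rewrite !zeta_opt_as_ratio by lra.
  apply Rmult_lt_compat_l; [exact HK|].
  assert (Hp : 0 < sqrt (a * K * rr)) by (apply sqrt_lt_R0; repeat apply Rmult_lt_0_compat; lra).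
  assert (HpC : sqrt (a * K * rr) * ((1 + rd / rr) * sqrt (K * rr / a)) = K * (rr + rd)).
  { rewrite Rmult_comm, Rmult_assoc, <- sqrt_mult
      by (try apply Rdiv_le_0_compat; repeat apply Rmult_le_pos; lra).
    replace (K * rr / a * (a * K * rr)) with ((K * rr) ^ 2) by (field; lra).
    rewrite sqrt_pow2 by (apply Rmult_le_pos; lra). field. lra. }
  apply pow2_ratio_increasing with (c := c).
  - exact Hp.
  - assert (0 < K * (rr + rd)) by (apply Rmult_lt_0_compat; lra). lra.
  - intros y Hy.
    pose proof (Rpower2_gt1 y ltac:(lra)).
    assert (Ht : 0 < sqrt (Rpower 2 y - 1)) by (apply sqrt_lt_R0; lra).
    pose proof (HG y Hy) as HGy. rewrite g_div_sqrt_eq in HGy by lra.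
    set (C := (1 + rd / rr) * sqrt (K * rr / a)) in *.
    assert (Hphi : phi y < C * sqrt (Rpower 2 y - 1)).
    { apply (Rmult_lt_reg_r (/ sqrt (Rpower 2 y - 1))); [apply Rinv_0_lt_compat; lra|].
      replace (C * sqrt (Rpower 2 y - 1) * / sqrt (Rpower 2 y - 1)) with C by (field; lra).
      exact HGy. }
    apply Rmult_lt_compat_l with (r := sqrt (a * K * rr)) in Hphi; [|exact Hp].
    assert (0 < rs * sqrt (Rpower 2 y - 1)) by (apply Rmult_lt_0_compat; lra). nra.
  - apply Rdiv_lt_0_compat; lra.
  - apply Rmult_lt_compat_r; [apply Rinv_0_lt_compat|]; lra.
  - apply (Rmult_lt_reg_r K); [lra|]. field_simplify; lra.
Qed.

Lemma zeta_opt_continuous_K (Rt K : R) : 0 < Rt -> 0 < K ->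
  continuity_pt (fun K' => zeta_opt a rr rd rs K' Rt) K.
Proof.
  intros HRt HK. apply continuity_pt_filterlim.
  apply (ex_derive_continuous (K := R_AbsRing) (V := R_NormedModule) (fun K' => zeta_opt a rr rd rs K' Rt)).
  pose proof (Rpower2_gt1 (Rt / K) ltac:(apply Rdiv_lt_0_compat; lra)).
  pose proof (zeta_opt_den_pos K Rt HK).
  unfold zeta_opt, Rpower in *. auto_derive. unfold Rminus, Rdiv in *.
  repeat split; try lra.
  repeat apply Rmult_lt_0_compat; lra.
Qed.

End OptimalM.

Lemma zeta'_csi_le (alpha rho_r rho_d rho_s rho_0 T Rt w : R) :
  0 < alpha -> 0 < rho_r -> 0 < rho_d -> 0 < rho_s -> 0 < Rt ->
  (forall K, 1 <= K <= Kmax rho_r rho_d rho_0 T -> zeta_opt alpha rho_r rho_d rho_s K Rt <= w) ->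
  Rbar_le (zeta'_csi alpha rho_r rho_d rho_s rho_0 T Rt) w.
Proof.
  intros Ha Hr Hd Hs HRt Hw. unfold zeta'_csi.
  apply Lub_Rbar_correct. intros z (M & K & HK1 & HK2 & HKM & ->); simpl.
  apply Rle_trans with (zeta_opt alpha rho_r rho_d rho_s K Rt).
  - apply zeta_csi_le_zeta_opt; lra.
  - apply Hw; lra.
Qed.

Lemma zeta_opt_le_zeta'_csi (alpha rho_r rho_d rho_s rho_0 T Rt K : R) :
  0 < alpha -> 0 < rho_r -> 0 < rho_d -> 0 < rho_s -> 0 < Rt ->
  1 <= K <= Kmax rho_r rho_d rho_0 T ->
  Rbar_le (zeta_opt alpha rho_r rho_d rho_s K Rt) (zeta'_csi alpha rho_r rho_d rho_s rho_0 T Rt).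
Proof.
  intros Ha Hr Hd Hs HRt HK. unfold zeta'_csi.
  destruct (zeta_csi_attains_zeta_opt alpha rho_r rho_d rho_s) with (K := K) (Rt := Rt)
    as (M & HKM & Heq); try lra.
  apply Lub_Rbar_correct. exists M, K. repeat split; lra.
Qed.

Theorem lemma6 (alpha rho_r rho_d rho_s rho_0 T c R1 R2 : R) :
  1 < alpha -> 0 < rho_r -> 0 < rho_d -> 0 < rho_s -> 0 < rho_0 -> 1 < T ->
  10 < Kmax rho_r rho_d rho_0 T ->
  (* c = c(Theta) is the unique positive solution of its defining equation *)
  c_eq alpha rho_r rho_d rho_0 T c ->
  (forall c', c_eq alpha rho_r rho_d rho_0 T c' -> c' = c) ->
  0 < R1 -> R1 < R2 -> R2 < c * Kmax rho_r rho_d rho_0 T ->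
  rho_r < alpha / (1 + rho_d / rho_r) ^ 2 * (g R1 ^ 2 / R1) ->
  rho_r < alpha / (1 + rho_d / rho_r) ^ 2 * (g R2 ^ 2 / R2) ->
  Rbar_lt (zeta'_csi alpha rho_r rho_d rho_s rho_0 T R1)
          (zeta'_csi alpha rho_r rho_d rho_s rho_0 T R2).
Proof.
  intros Ha Hr Hd Hs _ _ HK [Hc _] Huniq HR1 HR12 HR2 _ _.
  set (Km := Kmax rho_r rho_d rho_0 T) in *.
  set (W := zeta_opt alpha rho_r rho_d rho_s).
  destruct (continuity_ab_maj (fun K => W K R1) 1 Km ltac:(lra)
     ltac:(intros; apply zeta_opt_continuous_K; lra)) as [Ks [HKs HKs_range]].
  assert (Hub : Rbar_le (zeta'_csi alpha rho_r rho_d rho_s rho_0 T R1) (W Ks R1))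
    by (apply zeta'_csi_le; auto; lra).
  set (t := R2 / R1).
  assert (HtR : t * R1 = R2) by (unfold t; field; lra).
  assert (Ht : 1 < t) by (unfold t; apply (Rmult_lt_reg_r R1); [lra|]; field_simplify; lra).
  apply (Rbar_le_lt_trans _ _ _ Hub).
  destruct (Rle_lt_dec (t * Ks) Km) as [Hin | Hout].
  - apply (Rbar_lt_le_trans _ (W (t * Ks) R2)).
    + simpl. rewrite <- HtR. apply zeta_opt_scale_lt; lra.
    + apply zeta_opt_le_zeta'_csi; try lra. fold Km. split; nra.
  - set (s := Km / Ks).
    assert (HsK : s * Ks = Km) by (unfold s; field; lra).
    assert (Hs1 : 1 <= s) by (apply (Rmult_le_reg_r Ks); lra).
    assert (Hst : s < t) by (apply (Rmult_lt_reg_r Ks); lra).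
    apply (Rbar_lt_le_trans _ (W Km R2)); [simpl | apply zeta_opt_le_zeta'_csi; fold Km; lra].
    apply Rle_lt_trans with (W Km (s * R1)).
    + rewrite <- HsK. apply zeta_opt_scale_le; lra.
    + apply zeta_opt_increasing with (c := c); try lra.
      * intros y Hy. apply (g_div_sqrt_lt_below_c alpha rho_r rho_d rho_0 T c); fold Km; try lra.
        exact Huniq.
      * apply Rmult_lt_0_compat; lra.
      * rewrite <- HtR. apply Rmult_lt_compat_r; lra.
Qed.
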